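(* Let $F$ be a field, $U,V$ finite-dimensional $F$-vector spaces with $\dim U=n$ and $\dim V=m$, $A:U\times U\to V$ an alternating bilinear map whose image spans $V$, $u_1<\dots<u_n$ an ordered basis of $U$, and $\mathcal{B}$, $\mathcal{W}(\mathcal{B})$ as in the context. If $\mathcal{B}$ is not a tree of height one, then \[|\mathcal{W}(\mathcal{B})|\ge\left(\sum_{i=2}^{m+1}(n-i)\right)+(m-2),\] and in particular $\dim\operatorname{Im}\Psi\ge\left(\sum_{i=2}^{m+1}(n-i)\right)+(m-2)$.
   Context: $\mathcal{Y}$ is the set of $2$-element subsets of $\{1,\dots,n\}$, totally ordered by $\{i,j\}<\{r,s\}$ iff $\max\{i,j\}<\max\{r,s\}$, or the maxima are equal to $a$ and the remaining element of $\{i,j\}\setminus\{a\}$ is smaller than that of $\{r,s\}\setminus\{a\}$. $\mathcal{B}$ is constructed as follows: $\mathcal{B}_0=B_0=\emptyset$; inductively let $\{i,j\}$ ($i<j$) be the least element of $\mathcal{Y}$ with $A(u_i,u_j)\notin\operatorname{span}(B_k)$, and set $\mathcal{B}_{k+1}=\mathcal{B}_k\cup\{\{i,j\}\}$, $B_{k+1}=B_k\cup\{A(u_i,u_j)\}$; stop at $k=m$ and put $\mathcal{B}=\mathcal{B}_m$. $\mathcal{B}$ is a tree of height one if there is an $i$ with $i\in\{j,l\}$ for every $\{j,l\}\in\mathcal{B}$. $\mathcal{W}(\mathcal{B})$ is the set of $3$-element subsets of $\{1,\dots,n\}$ containing some $2$-element subset belonging to $\mathcal{B}$. $\Psi:U\otimes_F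 U\otimes_F U\to V\otimes_F U$ is the linear map with $\Psi(x\otimes y\otimes z)=A(x,y)\otimes z+A(y,z)\otimes x+A(z,x)\otimes y$. *)

From HB Require Import structures.
From mathcomp Require Import all_boot all_order all_algebra.
Set Implicit Arguments. Unset Strict Implicit. Unset Printing Implicit Defensive.
Import GRing.Theory.
Local Open Scope ring_scope.

Section Defs.
Variables (F : fieldType) (U V : vectType F) (n : nat).
Variables (A : U -> U -> V) (u : n.-tuple U).

(* index pairs {i,j} with i < j, represented as (i, j) *)
Definition pairY := ('I_n * 'I_n)%type.

(* the totally ordered set Y, listed in increasing order:
   first by max = j, then by the remaining element i *)
Definition Yseq : seq pairY :=
  flatten [seq map (fun i : 'I_n => ((i, j) : pairY)) (filter (fun i : 'I_n => (i < j)%N) (enum 'I_n)) | j : 'I_n <- enum 'I_n].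

Definition Aval (p : pairY) : V := A (u`_p.1) (u`_p.2).

(* B_{k+1} = B_k ∪ {least {i,j} in Y with A(u_i,u_j) ∉ span(B_k)};
   unchanged when no such element exists (the construction has stopped) *)
Definition stepB (Bk : seq pairY) : seq pairY :=
  match [seq p <- Yseq | Aval p \notin <<map Aval Bk>>%VS] with
  | p :: _ => rcons Bk p
  | [::] => Bk
  end.

(* iterate long enough (|Y| >= m steps) for the construction to stop *)
Definition calB : seq pairY := iter (size Yseq) stepB [::].

Definition tree_height_one (B : seq pairY) : Prop :=
  exists i : 'I_n, forall p, p \in B -> (i == p.1) || (i == p.2).

Definition calW (B : seq pairY) : {set {set 'I_n}} :=
  [set S : {set 'I_n} | (#|S| == 3)%N && has (fun p => [set p.1; p.2] \subset S) B].

(* V ⊗ U modelled as {ffun 'I_n -> V} via the basis u:  v ⊗ w |-> (k |-> coord_k(w) v) *)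
Definition tens (v : V) (w : U) : {ffun 'I_n -> V} :=
  [ffun k => coord u k w *: v].

Definition Psi_basis (a b c : 'I_n) : {ffun 'I_n -> V} :=
  tens (A u`_a u`_b) u`_c + tens (A u`_b u`_c) u`_a + tens (A u`_c u`_a) u`_b.

(* Im Psi = span of the images of the basis u_a ⊗ u_b ⊗ u_c of U ⊗ U ⊗ U *)
Definition ImPsi : {vspace {ffun 'I_n -> V}} :=
  <<[seq Psi_basis abc.1.1 abc.1.2 abc.2 | abc <- enum (@predT ('I_n * 'I_n * 'I_n)%type)]>>%VS.

End Defs.

(* Counting: adding an edge g to a list E of edges inside D creates the
   |D| - 2 triples c |: g, minus at most one for every edge of E meeting g;
   hence |W| >= \sum_(k < m) (n - 2 - k).  When B is not a star, either some
   vertex v lies on x >= 2 edges while y >= 1 edges avoid it, and the triples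
   through the star at v are disjoint from the triples inside [n] \ v, which
   gains (x - 1) y >= x + y - 2; or B is a matching and each edge brings n - 2
   fresh triples.
   Linear algebra: by construction A(u_i, u_j) lies in the span of the A(e),
   e in B, e <= {i, j} in Y, and Y is ordered colexicographically.  For
   S = e :|: {k} in W(B), the linear form "coefficient of A(e) in the k-th
   component" is 1 on Psi(u_e1, u_e2, u_k) and vanishes on the Psi-images
   chosen for all triples of smaller colexicographic rank, so these |W(B)|
   images are linearly independent. *)

From HB Require Import structures.
From mathcomp Require Import all_boot all_order all_algebra.
From mathcomp Require Import zify ring.
Set Implicit Arguments. Unset Strict Implicit. Unset Printing Implicit Defensive.
Import Order.TTheory GRing.Theory Num.Theory.

Lemma card_bigcup_seq_le (I : eqType) (T : finType) (r : seq I) (P : pred I)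
    (F : I -> {set T}) :
  #|\bigcup_(i <- r | P i) F i| <= \sum_(i <- r | P i) #|F i|.
Proof.
elim/big_rec2: _ => [|i k S _ leSk]; first by rewrite cards0.
by rewrite (leq_trans (leq_card_setU _ _)) ?leq_add2l.
Qed.

Lemma sum_sub_ord_closed (c : int) (a : nat) :
  (2 * \sum_(k < a) (c - k%:Z) = a%:Z * (2 * c - a%:Z + 1))%R.
Proof.
elim: a => [|a IH]; first by rewrite big_ord0 mulr0 mul0r.
by rewrite big_ord_recr /= mulrDr IH intS; ring.
Qed.

Lemma matching_bound_arith (c : int) (m : nat) :
  (\sum_(k < m) (c - 2 - k%:Z) + (m%:Z - 2) <= m%:Z * (c - 2) :> int)%R.
Proof. have := sum_sub_ord_closed (c - 2) m; move: (\sum_(k < m) _)%R => s; nia. Qed.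

Lemma star_bound_arith (c : int) (x y : nat) : 1 < x -> 0 < y ->
  (\sum_(k < x + y) (c - 2 - k%:Z) + ((x + y)%:Z - 2) <=
    \sum_(k < x) (c - 2 - k%:Z) + \sum_(k < y) (c - 1 - 2 - k%:Z) :> int)%R.
Proof.
move=> x_gt1 y_gt0.
have := sum_sub_ord_closed (c - 2) (x + y); have := sum_sub_ord_closed (c - 2) x.
have := sum_sub_ord_closed (c - 1 - 2) y.
move: (\sum_(k < x + y) _)%R (\sum_(k < x) _)%R (\sum_(k < y) _)%R => s t r; nia.
Qed.

Section Triples.
Variable n : nat.
Implicit Types (D g f S : {set 'I_n}) (E : seq {set 'I_n}).

Definition Wset D E : {set {set 'I_n}} :=
  [set S : {set 'I_n} | [&& S \subset D, #|S| == 3 & has (fun f => f \subset S) E]].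

Lemma card_apex_covered E g : g \notin E -> #|g| = 2 -> {in E, forall f, #|f| = 2} ->
  #|[set c | (c \notin g) && has (fun f => f \subset c |: g) E]|
    <= count (fun f => f :&: g != set0) E.
Proof.
move=> gNE g2 E2.
have fDg_le1 f : f \in E -> f :&: g != set0 -> #|f :\: g| <= 1.
  by rewrite -card_gt0 => /E2 f2; have := cardsID g f; rewrite f2; lia.
have sub : [set c | (c \notin g) && has (fun f => f \subset c |: g) E]
    \subset \bigcup_(f <- E | f :&: g != set0) (f :\: g).
  apply/subsetP => c; rewrite inE => /andP[cNg /hasP[f fE fcg]].
  have cf : c \in f.
    apply: contraNT gNE => cNf; suff <- : f = g by [].
    apply/eqP; rewrite eqEcard g2 (E2 f fE) leqnn andbT.
    apply/subsetP => x xf; move/subsetP: fcg => /(_ x xf); rewrite !inE.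
    by case: eqP xf cNf => // -> ->.
  have fDg_c : f :\: g \subset [set c].
    apply/subsetP => x; rewrite !inE => /andP[xNg xf].
    by move/subsetP: fcg => /(_ x xf); rewrite !inE (negPf xNg) orbF.
  rewrite -big_filter bigcup_seq; apply/bigcupP; exists f; last by rewrite !inE cNg.
  rewrite mem_filter fE andbT -card_gt0.
  have := subset_leq_card fDg_c; have := cardsID g f; rewrite (E2 f fE) cards1; lia.
apply: leq_trans (subset_leq_card sub) _; apply: leq_trans (card_bigcup_seq_le _ _ _) _.
rewrite -sum1_count big_seq_cond [X in _ <= X]big_seq_cond.
by apply: leq_sum => f /andP[/fDg_le1 + meets]; apply.
Qed.

Lemma card_Wset_cons D E g :
    g \notin E -> #|g| = 2 -> g \subset D -> {in E, forall f, #|f| = 2} ->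
  #|Wset D E| + #|D| <= #|Wset D (g :: E)| + 2 + count (fun f => f :&: g != set0) E.
Proof.
move=> gNE g2 gD E2.
set C := D :\: g; set Old := [set c | (c \notin g) && has (fun f => f \subset c |: g) E].
have cardC : #|C| + 2 = #|D| by rewrite cardsD (setIidPr gD) g2 subnK // -g2 subset_leq_card.
have cardOld := leq_trans (subset_leq_card (subsetIr C Old)) (card_apex_covered gNE g2 E2).
have cardNew : #|Wset D E| + #|C :\: Old| <= #|Wset D (g :: E)|.
  have gU_inj : {in C :\: Old &, injective (fun c => c |: g)}.
    move=> c1 c2; rewrite !inE => /and3P[_ c1g _] /and3P[_ c2g _] e.
    have : c1 \in c2 |: g by rewrite -e setU11.
    by rewrite !inE (negPf c1g) orbF => /eqP.
  rewrite -(card_in_imset gU_inj) -cardsUI.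
  have -> : Wset D E :&: [set c |: g | c in C :\: Old] = set0.
    apply/setP => S; rewrite !inE; apply/negP => /andP[/and3P[_ _ oldS]].
    case/imsetP => c; rewrite !inE => /andP[cNOld /andP[cNg _]] eS.
    by move: cNOld; rewrite -eS oldS cNg.
  rewrite cards0 addn0 subset_leq_card // subUset.
  apply/andP; split; apply/subsetP => S; rewrite !inE.
    by case/and3P => -> -> oldS /=; rewrite oldS orbT.
  case/imsetP => c; rewrite !inE => /and3P[_ cNg cD] ->.
  by rewrite cardsU1 g2 cNg subUset sub1set cD gD /= subsetUr.
move: cardC cardOld cardNew (cardsID Old C); lia.
Qed.

Lemma card_Wset_ge_sum D E : uniq E -> {in E, forall f, #|f| = 2 /\ f \subset D} ->
  (\sum_(k < size E) (#|D|%:Z - 2 - k%:Z) <= #|Wset D E|%:Z :> int)%R.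
Proof.
elim: E => [|g E IH] /=; first by rewrite big_ord0.
case/andP=> gNE uE E2D; have [g2 gD] := E2D g (mem_head _ _).
have {}E2D : {in E, forall f, #|f| = 2 /\ f \subset D}.
  by move=> f fE; apply: E2D; rewrite inE fE orbT.
have := card_Wset_cons gNE g2 gD (fun f fE => (E2D f fE).1).
have := IH uE E2D; rewrite big_ord_recr /=.
have := count_size (fun f => f :&: g != set0) E.
by move: (\sum_(k < size E) _)%R => s; lia.
Qed.

Lemma card_Wset_matching D E : uniq E -> {in E, forall f, #|f| = 2 /\ f \subset D} ->
    (forall v, count (fun f => v \in f) E <= 1) ->
  ((size E)%:Z * (#|D|%:Z - 2) <= #|Wset D E|%:Z)%R.
Proof.
elim: E => [|g E IH]; first by rewrite mul0r.
rewrite cons_uniq [size _]/= => /andP[gNE uE] E2D deg1; have [g2 gD] := E2D g (mem_head _ _).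
have {}E2D : {in E, forall f, #|f| = 2 /\ f \subset D}.
  by move=> f fE; apply: E2D; rewrite inE fE orbT.
have disjE : count (fun f => f :&: g != set0) E = 0.
  apply/eqP; rewrite -leqn0 leqNgt -has_count; apply/hasP => -[f fE /set0Pn[v]].
  rewrite inE => /andP[vf vg]; have := deg1 v; rewrite /= vg add1n ltnS leqn0.
  by apply/negP; rewrite -lt0n -has_count; apply/hasP; exists f.
have {}deg1 v : count (fun f => v \in f) E <= 1.
  by apply: leq_trans (deg1 v); rewrite leq_addl.
have := card_Wset_cons gNE g2 gD (fun f fE => (E2D f fE).1).
have := IH uE E2D deg1; rewrite disjE; nia.
Qed.

Lemma card_Wset_star E v : uniq E -> {in E, forall f, #|f| = 2} ->
    1 < count (fun f => v \in f) E -> has (fun f => v \notin f) E ->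
  (\sum_(k < size E) (n%:Z - 2 - k%:Z) + ((size E)%:Z - 2) <= #|Wset setT E|%:Z :> int)%R.
Proof.
move=> uE E2 v_deg2 v_avoided.
set Es := filter (fun f => v \in f) E; set Er := filter (fun f => v \notin f) E.
have sizeE : size E = (size Es + size Er)%N by rewrite !size_filter count_predC.
have Es_gt1 : 1 < size Es by rewrite size_filter.
have Er_gt0 : 0 < size Er by rewrite size_filter -has_count.
have WsE : Wset setT Es \subset Wset setT E.
  apply/subsetP => S; rewrite !inE => /and3P[-> -> /hasP[f]].
  by rewrite mem_filter => /andP[_ fE] fS; apply/hasP; exists f.
have WrE : Wset [set~ v] Er \subset Wset setT E.
  apply/subsetP => S; rewrite !inE subsetT => /and3P[_ -> /hasP[f]].
  by rewrite mem_filter => /andP[_ fE] fS; apply/hasP; exists f.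
have disjW : [disjoint Wset setT Es & Wset [set~ v] Er].
  apply/pred0P => S; rewrite !inE; apply/negP.
  case/andP=> /and3P[_ _ /hasP[f]]; rewrite mem_filter => /andP[vf _] fS.
  by case/and3P=> /subsetP/(_ v (subsetP fS v vf)); rewrite !inE eqxx.
have cardW : (#|Wset setT Es| + #|Wset [set~ v] Er| <= #|Wset setT E|)%N.
  rewrite -cardsUI disjoint_setI0 // cards0 addn0.
  by apply: subset_leq_card; rewrite subUset WsE WrE.
have EsP : {in Es, forall f, #|f| = 2 /\ f \subset setT}.
  by move=> f; rewrite mem_filter subsetT => /andP[_ /E2].
have ErP : {in Er, forall f, #|f| = 2 /\ f \subset [set~ v]}.
  move=> f; rewrite mem_filter => /andP[vNf fE]; split; first exact: E2.
  by apply/subsetP => x xf; rewrite !inE; apply: contraNneq vNf => <-.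
have := card_Wset_ge_sum (filter_uniq _ uE) EsP; rewrite cardsT card_ord => cardWs.
have := card_Wset_ge_sum (filter_uniq _ uE) ErP.
rewrite cardsC1 card_ord predn_int ?(leq_ltn_trans _ (ltn_ord v)) // => cardWr.
rewrite sizeE; apply: le_trans (star_bound_arith n Es_gt1 Er_gt0) _.
by apply: le_trans (lerD cardWs cardWr) _; rewrite -PoszD lez_nat.
Qed.

Lemma card_Wset_nonstar E : uniq E -> {in E, forall f, #|f| = 2} ->
    ~ (exists v, {in E, forall f, v \in f}) ->
  (\sum_(k < size E) (n%:Z - 2 - k%:Z) + ((size E)%:Z - 2) <= #|Wset setT E|%:Z :> int)%R.
Proof.
move=> uE E2 nonstar.
case: (boolP [exists v, 1 < count (fun f => v \in f) E]) => [/existsP[v v_deg2]|/existsPn deg1].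
  apply: card_Wset_star v_deg2 _ => //; apply/hasPn => star.
  by apply: nonstar; exists v => f /star/negbNE.
have E2T f : f \in E -> #|f| = 2 /\ f \subset setT by move=> fE; rewrite subsetT E2.
have {}deg1 v : count (fun f => v \in f) E <= 1 by rewrite leqNgt deg1.
have := card_Wset_matching uE E2T deg1; rewrite cardsT card_ord => cardW.
by apply: le_trans cardW; apply: matching_bound_arith.
Qed.

End Triples.

Lemma sum_shift2 (c : int) (m : nat) :
  (\sum_(2 <= i < m.+2) (c - i%:Z) = \sum_(k < m) (c - 2 - k%:Z))%R.
Proof. by rewrite !big_add1 big_mkord; apply: eq_bigr => k _; rewrite -addn2 PoszD opprD addrA addrAC. Qed.

Definition edge n (p : pairY n) : {set 'I_n} := [set p.1; p.2].

Lemma edge_inj n (p q : pairY n) : p.1 < p.2 -> q.1 < q.2 -> edge p = edge q -> p = q.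
Proof.
case: p q => [p1 p2] [q1 q2]; rewrite /edge /= => lt_p lt_q e.
have /set2P[e1|e1] : p1 \in [set q1; q2] by rewrite -e set21.
  have /set2P[e2|->] : p2 \in [set q1; q2] by rewrite -e set22.
    by rewrite e1 e2 ltnn in lt_p.
  by rewrite e1.
have /set2P[e3|e3] : q1 \in [set p1; p2] by rewrite e set21.
  by rewrite e3 e1 ltnn in lt_q.
by move: lt_p; rewrite e1 -e3 ltnNge (ltnW lt_q).
Qed.

Lemma card_calW_ge n (B : seq (pairY n)) :
    uniq B -> {in B, forall p : pairY n, p.1 < p.2} -> ~ tree_height_one B ->
  (\sum_(2 <= i < (size B).+2) (n%:Z - i%:Z) + ((size B)%:Z - 2) <= #|calW B|%:Z :> int)%R.
Proof.
move=> uB ltB nontree.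
have -> : calW B = Wset setT (map (@edge n) B).
  by apply/setP => S; rewrite !inE subsetT has_map.
rewrite sum_shift2 -(size_map (@edge n)); apply: card_Wset_nonstar.
- by rewrite map_inj_in_uniq // => p q /ltB lt_p /ltB lt_q; apply: edge_inj.
- by move=> _ /mapP[p /ltB lt_p ->]; rewrite cards2 neq_ltn lt_p.
- case=> v star; apply: nontree; exists v => p pB.
  by have := star _ (map_f _ pB); rewrite !inE !(eq_sym v).
Qed.

Definition colex n (S : {set 'I_n}) : nat := \sum_(x in S) 2 ^ x.

Lemma colexU1 n (S : {set 'I_n}) x : x \notin S -> colex (x |: S) = 2 ^ x + colex S.
Proof. by move=> xNS; rewrite /colex big_setU1. Qed.

Lemma colexD1 n (S : {set 'I_n}) x : x \in S -> colex S = 2 ^ x + colex (S :\ x).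
Proof. by move=> xS; rewrite -colexU1 ?setD11 // setD1K. Qed.

Lemma colex_edge n (p : pairY n) : p.1 != p.2 -> colex (edge p) = 2 ^ p.1 + 2 ^ p.2.
Proof. by move=> ne_p; rewrite colexU1 ?inE // /colex big_set1. Qed.

Lemma setU1_pairD1 n (a b c : 'I_n) : a != b -> a != c -> b != c ->
  (a |: [set b; c]) :\ b = [set c; a] /\ (a |: [set b; c]) :\ c = [set a; b].
Proof.
move=> ab ac bc; split; apply/setP => z; rewrite !inE.
  have [->|_] := eqVneq z b; first by rewrite /= (negPf bc) eq_sym (negPf ab).
  by rewrite /= orbC.
have [->|_] := eqVneq z c; first by rewrite /= !(eq_sym c) (negPf ac) (negPf bc).
by rewrite /= !orbF.
Qed.

Definition triple n (ek : pairY n * 'I_n) : {set 'I_n} := ek.2 |: edge ek.1.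

Lemma pairwise_flatten (T : Type) (r : rel T) (ss : seq (seq T)) :
  all (pairwise r) ss -> pairwise (allrel r) ss -> pairwise r (flatten ss).
Proof.
elim: ss => [|s ss IH] //= /andP[rs rss] /andP[rs_ss r_ss].
rewrite pairwise_cat rs IH // andbT.
elim: ss rs_ss {IH rss r_ss} => [|t ss IH] /=; first by rewrite allrel0r.
by case/andP=> rst /IH; rewrite allrel_catr rst.
Qed.

Lemma mem_Yseq n (p : pairY n) : (p \in Yseq n) = (p.1 < p.2).
Proof.
apply/flattenP/idP => [[_ /mapP[j _ ->] /mapP[i]]|lt_p].
  by rewrite mem_filter => /andP[lt_ij _] ->.
exists [seq (i, p.2) : pairY n | i : 'I_n <- [seq i : 'I_n <- enum 'I_n | i < p.2]].
  exact: (map_f _ (mem_enum _ p.2)).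
by apply/mapP; exists p.1; [rewrite mem_filter lt_p mem_enum | case: p {lt_p}].
Qed.

Lemma Yseq_pairwise n :
  pairwise (fun p q : pairY n => 2 ^ p.1 + 2 ^ p.2 < 2 ^ q.1 + 2 ^ q.2) (Yseq n).
Proof.
have ltn_enum : pairwise (fun i j : 'I_n => i < j) (enum 'I_n).
  have := iota_ltn_sorted 0 n; rewrite -val_enum_ord sorted_map sorted_pairwise //.
  by move=> j i k; apply: ltn_trans.
apply: pairwise_flatten.
  apply/allP => _ /mapP[j _ ->]; rewrite pairwise_map; apply: pairwise_filter.
  by apply: sub_pairwise ltn_enum => i i' /= lt_ii'; rewrite ltn_add2r ltn_exp2l.
rewrite pairwise_map; apply: sub_pairwise ltn_enum => j j' lt_jj'.
rewrite /= allrel_mapl allrel_mapr; apply/allrelP => i i'; rewrite !mem_filter /=.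
case/andP=> lt_ij _ _; have : 2 ^ j.+1 <= 2 ^ j' by rewrite leq_exp2l.
have : 2 ^ i < 2 ^ j by rewrite ltn_exp2l.
by rewrite expnS; lia.
Qed.

Lemma Yseq_index_colex n (p q : pairY n) : p \in Yseq n -> q \in Yseq n ->
  index p (Yseq n) <= index q (Yseq n) -> p = q \/ colex (edge p) < colex (edge q).
Proof.
move=> pY qY; rewrite leq_eqVlt => /orP[/eqP idx_pq|lt_pq].
  by left; rewrite -(nth_index p pY) idx_pq nth_index.
have neY r : r \in Yseq n -> r.1 != r.2 by rewrite mem_Yseq neq_ltn => ->.
right; rewrite !colex_edge ?neY //.
have tr : transitive (fun p q : pairY n => 2 ^ p.1 + 2 ^ p.2 < 2 ^ q.1 + 2 ^ q.2).
  by move=> r r1 r2; apply: ltn_trans.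
by have := Yseq_pairwise n; rewrite -sorted_pairwise // => /(sorted_ltn_index tr); apply.
Qed.

Lemma filter_eq_cons (T : eqType) (P : pred T) (s t : seq T) x :
  filter P s = x :: t ->
  [/\ x \in s, P x & {in s, forall y, index y s < index x s -> ~~ P y}].
Proof.
elim: s => [|y s IH] //=; case: ifP => [Py [<- _]|Py /IH[xs Px before]].
  by split; rewrite ?mem_head // => z _; rewrite /= eqxx.
have /negbTE yx : y != x by apply: contraFneq Py => ->.
split; rewrite ?inE ?xs ?orbT // => z; rewrite /= yx.
case: (y =P z) => [<- _ _|/eqP yz]; first by rewrite Py.
by rewrite inE eq_sym (negPf yz) ltnS; apply: before.
Qed.

Section GreedyBasis.
Variables (F : fieldType) (U V : vectType F) (n : nat) (A : U -> U -> V) (u : n.-tuple U).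
Local Notation Aval := (Aval A u).
Local Notation stepB := (stepB A u).
Local Notation Y := (Yseq n).
Local Notation idx p := (index p (Yseq n)).
Implicit Types (p q : pairY n) (Bk : seq (pairY n)).

Definition spans_Y Bk := all (fun p => Aval p \in <<map Aval Bk>>%VS) Y.

Definition greedy_inv Bk :=
  [/\ {subset Bk <= Y}, free (map Aval Bk),
      {in Y, forall p, Aval p \in <<map Aval Bk>>%VS ->
         Aval p \in <<map Aval [seq q <- Bk | (idx q <= idx p)%N]>>%VS} &
      {in Bk, forall q, {in Y, forall p, idx p <= idx q -> Aval p \in <<map Aval Bk>>%VS}}].

Lemma stepB_id Bk : spans_Y Bk -> stepB Bk = Bk.
Proof.
move=> /allP spanY; rewrite /stepB.
have : ~~ has (fun p => Aval p \notin <<map Aval Bk>>%VS) Y.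
  by apply/hasPn => p /spanY; rewrite negbK.
by rewrite has_filter negbK => /eqP ->.
Qed.

Lemma size_stepB Bk : ~~ spans_Y Bk -> size (stepB Bk) = (size Bk).+1.
Proof.
rewrite /spans_Y /stepB -has_predC has_filter.
by case: [seq p <- Y | _] => [|p t] //; rewrite size_rcons.
Qed.

Lemma greedy_inv_stepB Bk : greedy_inv Bk -> greedy_inv (stepB Bk).
Proof.
case=> subY freeB triB closedB; rewrite /stepB.
case E: [seq p <- Y | _] => [|p0 t]; first by split.
have [p0Y p0N before] := filter_eq_cons E.
have spanB_sub : (<<map Aval Bk>> <= <<map Aval (rcons Bk p0)>>)%VS.
  by apply: sub_span => v; rewrite map_rcons mem_rcons inE => ->; rewrite orbT.
have Bk_before q : q \in Bk -> idx q < idx p0.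
  by move=> qB; rewrite ltnNge; apply: contra p0N; apply: closedB.
have before_span p : p \in Y -> idx p < idx p0 -> Aval p \in <<map Aval Bk>>%VS.
  by move=> pY /(before p pY); rewrite negbK.
split.
- by move=> q; rewrite mem_rcons inE => /orP[/eqP ->|/subY].
- have permB : perm_eq (rcons Bk p0) (p0 :: Bk) by rewrite perm_rcons.
  by rewrite (perm_free (perm_map _ permB)) /= free_cons p0N freeB.
- move=> p pY spanp; case: (ltnP (idx p) (idx p0)) => [lt_p|le_p].
    by rewrite filter_rcons leqNgt lt_p /=; apply/triB/before_span.
  suff -> : [seq q <- rcons Bk p0 | (idx q <= idx p)%N] = rcons Bk p0 by [].
  apply/all_filterP/allP => q; rewrite mem_rcons inE => /orP[/eqP -> //|/Bk_before].
  by move/ltnW/leq_trans; apply.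
- move=> q; rewrite mem_rcons inE => /orP[/eqP ->|qB] p pY le_p; last first.
    exact/(subvP spanB_sub)/(closedB q qB).
  case: (ltnP (idx p) (idx p0)) => [lt_p|ge_p]; first exact/(subvP spanB_sub)/before_span.
  have -> : p = p0.
    by rewrite -(nth_index p pY) (@anti_leq (idx p) (idx p0)) ?le_p ?ge_p // nth_index.
  by apply: memv_span; rewrite map_rcons mem_rcons mem_head.
Qed.

Lemma greedy_inv_iter k :
  greedy_inv (iter k stepB [::]) /\
  (spans_Y (iter k stepB [::]) \/ size (iter k stepB [::]) = k).
Proof.
elim: k => [|k [invk [spank|sizek]]] /=.
- by split; [split; rewrite ?nil_free | right].
- by split; [apply: greedy_inv_stepB | left; rewrite stepB_id].
split; first exact: greedy_inv_stepB.
have [spank|/size_stepB ->] := boolP (spans_Y (iter k stepB [::])); last by right; rewrite sizek.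
by left; rewrite stepB_id.
Qed.

Lemma calB_greedy : greedy_inv (calB A u) /\ spans_Y (calB A u).
Proof.
have [invB [spanB|sizeB]] := greedy_inv_iter (size Y); split => //.
have [subY /free_uniq/map_uniq uB _ _] := invB.
have [_ eqB] := uniq_min_size uB subY (eq_leq (esym sizeB)).
by apply/allP => p pY; apply/memv_span/map_f; rewrite /calB eqB.
Qed.

End GreedyBasis.

Local Open Scope ring_scope.

Lemma mem_span_linear (F : fieldType) (U V : vectType F) (f : U -> V) (X : seq U) x :
  linear f -> x \in <<X>>%VS -> f x \in <<map f X>>%VS.
Proof.
move=> lin_f xX; pose fL : {linear U -> V} := HB.pack f (GRing.isLinear.Build _ _ _ _ f lin_f).
by have := memv_img (linfun fL) xX; rewrite limg_span !lfunE (eq_map (lfunE fL)).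
Qed.

Lemma scalar_span_eq0 (F : fieldType) (W : vectType F) (phi : W -> F) (X : seq W) v :
  scalar phi -> {in X, forall x, phi x = 0} -> v \in <<X>>%VS -> phi v = 0.
Proof.
move=> phiZ X0 vX; pose phiL : {scalar W} := HB.pack phi (GRing.isLinear.Build _ _ _ _ phi phiZ).
rewrite -[phi v]/(phiL v) (coord_span (X := in_tuple X) vX) linear_sum big1 // => j _.
by rewrite linearZ /= X0 ?mulr0 // mem_nth.
Qed.

Section AlternatingMap.
Variables (F : fieldType) (U V : vectType F) (n : nat) (A : U -> U -> V) (u : n.-tuple U).
Hypotheses (hAl : forall y, linear (A ^~ y)) (hAr : forall x, linear (A x)).
Hypothesis hAalt : forall x, A x x = 0.
Hypothesis hspan : forall W : {vspace V}, (forall x y, A x y \in W) -> W = fullv.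
Hypothesis hbasis : basis_of fullv u.
Local Notation Aval := (Aval A u).
Local Notation B := (calB A u).
Local Notation idx p := (index p (Yseq n)).

Lemma alt_anti x y : A y x = - A x y.
Proof.
have addAl a b c : A (a + b) c = A a c + A b c by have := hAl c 1 a b; rewrite !scale1r.
have addAr a b c : A c (a + b) = A c a + A c b by have := hAr c 1 a b; rewrite !scale1r.
have /eqP := hAalt (x + y).
by rewrite addAl !addAr !hAalt add0r addr0 addr_eq0 => /eqP ->; rewrite opprK.
Qed.

Let B_Y : {subset B <= Yseq n}. Proof. by case: (calB_greedy A u) => -[]. Qed.
Let freeB : free (map Aval B). Proof. by case: (calB_greedy A u) => -[]. Qed.
Let spansB : spans_Y A u B. Proof. by case: (calB_greedy A u). Qed.

Lemma span_calB : <<map Aval B>>%VS = fullv.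
Proof.
set W := <<map Aval B>>%VS.
have spanu : <<u>>%VS = fullv by case/andP: hbasis => /eqP.
have Aij (i j : 'I_n) : A u`_i u`_j \in W.
  have Avalij (p : pairY n) : (p.1 < p.2)%N -> Aval p \in W.
    by rewrite -mem_Yseq => /(allP spansB).
  case: (ltngtP i j) => [lt_ij|lt_ji|/val_inj->]; first exact: (Avalij (i, j)).
    by rewrite alt_anti memvN; apply: (Avalij (j, i)).
  by rewrite hAalt mem0v.
have span_uW (f : U -> V) z : linear f -> (forall j : 'I_n, f u`_j \in W) -> f z \in W.
  move=> lin_f fuW; have zu : z \in <<u>>%VS by rewrite spanu memvf.
  apply: subvP (mem_span_linear lin_f zu); apply/span_subvP => _ /mapP[_ /tnthP[j ->] ->].
  by rewrite (tnth_nth 0).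
by apply: hspan => x y; exact: span_uW _ _ (hAl y) (fun i => span_uW _ _ (hAr _) (Aij i)).
Qed.

Lemma dim_calB : \dim (fullv : {vspace V}) = size B.
Proof. by rewrite -span_calB (eqP freeB) size_map. Qed.


Local Notation b := (in_tuple (map Aval B)).
Local Notation Psi_of ek := (Psi_basis A u ek.1.1 ek.1.2 ek.2).
Local Notation colex_ge :=
  (fun ek ek' : pairY n * 'I_n => colex (triple ek') <= colex (triple ek))%N.

Let B_lt p : p \in B -> (p.1 < p.2)%N. Proof. by move/B_Y; rewrite mem_Yseq. Qed.

Let triB : {in Yseq n, forall p,
  Aval p \in <<map Aval [seq q <- B | (idx q <= idx p)%N]>>%VS}.
Proof. by case: (calB_greedy A u) => -[_ _ tri _] /allP spanY p pY; apply/tri/spanY. Qed.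

Lemma coord_Aval e (i : 'I_(size (map Aval B))) r :
  val i = index e B -> r \in B -> coord b i (Aval r) = (r == e)%:R.
Proof.
move=> ie rB; have r_lt : (index r B < size (map Aval B))%N by rewrite size_map index_mem.
have -> : Aval r = b`_(Ordinal r_lt) by rewrite /= (nth_map r) ?nth_index ?index_mem.
rewrite coord_free //; suff -> : (Ordinal r_lt == i) = (r == e) by [].
apply/idP/idP => [/eqP/(congr1 val) /= ri|/eqP re]; last by apply/eqP/val_inj; rewrite /= ie re.
have eB : e \in B by rewrite -index_mem -ie -(size_map Aval) ltn_ord.
by rewrite -(nth_index r rB) ri ie nth_index.
Qed.

Lemma coord_Aval_neq0 e i p : val i = index e B -> p \in Yseq n ->
  coord b i (Aval p) != 0 -> (idx e <= idx p)%N.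
Proof.
move=> ie pY; apply: contraR; rewrite -ltnNge => lt_pe; apply/eqP.
have coord_scalar : scalar (coord b i) by move=> a x y; exact: linearP.
apply: scalar_span_eq0 coord_scalar _ (triB pY) => v /mapP[q].
rewrite mem_filter => /andP[le_qp qB] ->; rewrite (coord_Aval ie qB).
by case: eqP le_qp => // ->; rewrite leqNgt lt_pe.
Qed.

Lemma coord_A_neq0 e i (x y : 'I_n) : val i = index e B -> x != y ->
  coord b i (A u`_x u`_y) != 0 -> edge e = [set x; y] \/ (colex (edge e) < colex [set x; y])%N.
Proof.
wlog lt_xy : x y / (x < y)%N => [hwlog ie ne_xy|ie _].
  case: (ltngtP x y) => [/hwlog|/hwlog|/val_inj exy]; [exact|..]; last first.
    by rewrite exy eqxx in ne_xy.
  by rewrite alt_anti linearN oppr_eq0 setUC; apply; rewrite // eq_sym.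
have xyY : ((x, y) : pairY n) \in Yseq n by rewrite mem_Yseq.
have eB : e \in B by rewrite -index_mem -ie -(size_map Aval) ltn_ord.
by move/(coord_Aval_neq0 ie xyY)/(Yseq_index_colex (B_Y eB) xyY) => [->|]; [left|right].
Qed.

Lemma coord_A_triple e i k (T : {set 'I_n}) (x y : 'I_n) :
    val i = index e B -> k \notin edge e -> k \in T -> T :\ k = [set x; y] -> x != y ->
  coord b i (A u`_x u`_y) != 0 -> k |: edge e = T \/ (colex (k |: edge e) < colex T)%N.
Proof.
move=> ie kNe kT Txy ne_xy /(coord_A_neq0 ie ne_xy)[exy|lt_e].
  by left; rewrite exy -Txy setD1K.
by right; rewrite (colexD1 kT) colexU1 // Txy ltn_add2l.
Qed.

Lemma Psi_basisE a c d k : Psi_basis A u a c d k =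
  (d == k)%:R *: A u`_a u`_c + (a == k)%:R *: A u`_c u`_d + (c == k)%:R *: A u`_d u`_a.
Proof. by rewrite /Psi_basis /tens !ffunE !coord_free ?(basis_free hbasis). Qed.

Lemma coord_Psi_neq0 e i k (ek : pairY n * 'I_n) :
    val i = index e B -> k \notin edge e -> ek.1 \in B -> ek.2 \notin edge ek.1 ->
    coord b i (Psi_of ek k) != 0 ->
  triple (e, k) = triple ek \/ (colex (triple (e, k)) < colex (triple ek))%N.
Proof.
case: ek => [[e1 e2] k'] /= ie kNe eB; rewrite /triple /edge /= !inE negb_or.
case/andP=> ne1 ne2; have ne12 : e1 != e2 by have := B_lt eB; rewrite neq_ltn => ->.
have [rot1 rot2] := setU1_pairD1 ne1 ne2 ne12.
rewrite Psi_basisE; move: kNe; case: (eqVneq k' k) => [<-|nk'k] kNe.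
  rewrite !(eq_sym _ k') (negPf ne1) (negPf ne2) !scaler_nat mulr1n !mulr0n !addr0.
  by apply: coord_A_triple => //; rewrite ?setU11 ?setU1K // !inE negb_or ne1.
case: (eqVneq e1 k) kNe => [<-|n1k] kNe.
  rewrite (eq_sym e2) (negPf ne12) !scaler_nat mulr1n !mulr0n add0r addr0.
  by apply: coord_A_triple; rewrite // 1?eq_sym // !inE eqxx orbT.
case: (eqVneq e2 k) kNe => [<-|n2k] kNe.
  rewrite !scaler_nat mulr1n !mulr0n !add0r.
  by apply: coord_A_triple; rewrite // !inE eqxx !orbT.
by rewrite !scaler_nat !mulr0n !addr0 linear0 eqxx.
Qed.

Lemma free_Psi (L : seq (pairY n * 'I_n)) :
    {in L, forall ek, ek.1 \in B /\ ek.2 \notin edge ek.1} -> uniq (map (@triple n) L) ->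
    sorted colex_ge L ->
  free (map (fun ek => Psi_of ek) L).
Proof.
have geT : transitive colex_ge.
  by move=> y x z le_yx le_zy; exact: leq_trans le_zy le_yx.
elim: L => [_ _ _|[e k] L IH L_ok /andP[tNL uL] sL]; first exact: nil_free.
have L_ok' : {in L, forall ek, ek.1 \in B /\ ek.2 \notin edge ek.1}.
  by move=> ek ekL; apply: L_ok; rewrite inE ekL orbT.
rewrite /= free_cons (IH L_ok' uL (path_sorted sL)) andbT.
have [/= eB kNe] := L_ok (e, k) (mem_head _ _).
have ie_lt : (index e B < size (map Aval B))%N by rewrite size_map index_mem.
pose phi (f : {ffun 'I_n -> V}) := coord b (Ordinal ie_lt) (f k).
have phiZ : scalar phi by move=> a f g; rewrite /phi !ffunE linearP.
have phi_head : phi (Psi_of (e, k)) = 1.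
  have [ne1 ne2] : e.1 != k /\ e.2 != k.
    by move: kNe; rewrite !inE negb_or !(eq_sym k) => /andP[].
  rewrite /phi Psi_basisE (negPf ne1) (negPf ne2) eqxx !scaler_nat mulr1n !mulr0n !addr0.
  by rewrite (coord_Aval (e := e)) ?eqxx.
apply/negP => /(scalar_span_eq0 phiZ) phi0.
suff : phi (Psi_of (e, k)) = 0 by rewrite phi_head => /eqP; rewrite oner_eq0.
apply: phi0 => _ /mapP[ek ekL ->]; apply/eqP; apply: contraT => /(coord_Psi_neq0 _ kNe) [] //.
1,2: by case: (L_ok' ek ekL).
- by move=> e_ek; case/mapP: tNL; exists ek.
- by rewrite ltnNge; move/allP: (order_path_min geT sL) => /(_ ek ekL) ->.
Qed.

Lemma calW_split (S : {set 'I_n}) : S \in calW B ->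
  exists ek : pairY n * 'I_n, [&& ek.1 \in B, ek.2 \notin edge ek.1 & triple ek == S].
Proof.
rewrite inE => /andP[/eqP S3 /hasP[p pB pS]].
have p2 : #|edge p| = 2%N by rewrite cards2 neq_ltn B_lt.
have /cards1P[k Sp] : #|S :\: edge p| == 1%N by rewrite cardsD (setIidPr pS) S3 p2.
have : k \in S :\: edge p by rewrite Sp set11.
rewrite inE => /andP[kNp kS]; exists (p, k).
by rewrite pB kNp eqEcard cardsU1 kNp p2 S3 leqnn andbT subUset sub1set kS pS.
Qed.

Lemma card_calW_le_dim_ImPsi : (#|calW B| <= \dim (ImPsi A u))%N.
Proof.
have [->|[S0 S0W]] := set_0Vmem (calW B); first by rewrite cards0.
have [ek0 _] := calW_split S0W.
pose good S (ek : pairY n * 'I_n) := [&& ek.1 \in B, ek.2 \notin edge ek.1 & triple ek == S].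
pose rep S := odflt ek0 [pick ek | good S ek].
have repP S : S \in calW B -> good S (rep S).
  case/calW_split=> ek gek; rewrite /rep; case: pickP => [ek' //|/(_ ek)].
  by rewrite /good gek.
pose L := sort colex_ge (map rep (enum (calW B))).
have permL : perm_eq L (map rep (enum (calW B))) by rewrite perm_sort.
have L_ok : {in L, forall ek, ek.1 \in B /\ ek.2 \notin edge ek.1}.
  move=> ek; rewrite (perm_mem permL) => /mapP[S]; rewrite mem_enum => /repP.
  by case/and3P=> ? ? _ ->.
have uL : uniq (map (@triple n) L).
  rewrite (perm_uniq (perm_map _ permL)) -map_comp.
  have -> : map (@triple n \o rep) (enum (calW B)) = enum (calW B).
    by rewrite -[RHS]map_id; apply/eq_in_map => S; rewrite mem_enum => /repP/and3P[_ _ /eqP].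
  exact: enum_uniq.
have sL : sorted colex_ge L by apply: sort_sorted => ek ek'; apply: leq_total.
have /eqP dimL := free_Psi L_ok uL sL.
rewrite cardE -(size_map rep) -(perm_size permL) -(size_map (fun ek => Psi_of ek)) -dimL.
apply/dimvS/span_subvP => _ /mapP[ek _ ->]; apply/memv_span/mapP.
by exists ((ek.1.1, ek.1.2), ek.2); rewrite ?mem_enum.
Qed.

End AlternatingMap.

Unset Implicit Arguments.

Theorem proposition2p9 (F : fieldType) (U V : vectType F) (n : nat)
  (A : U -> U -> V) (u : n.-tuple U)
  (hAl : forall y : U, linear (A ^~ y))
  (hAr : forall x : U, linear (A x))
  (hAalt : forall x : U, A x x = 0)
  (hspan : forall W : {vspace V}, (forall x y : U, A x y \in W) -> W = fullv)
  (hbasis : basis_of fullv u)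
  (hnot : ~ tree_height_one (calB A u)) :
  let m := \dim (fullv : {vspace V}) in
  let bound : int := (\sum_(2 <= i < m.+2) (n%:Z - i%:Z)) + (m%:Z - 2) in
  bound <= (#|calW (calB A u)|)%:Z /\ bound <= (\dim (ImPsi A u))%:Z.
Proof.
move=> m bound.
have [[B_Y freeB _ _] _] := calB_greedy A u.
have B_lt : {in calB A u, forall p : pairY n, (p.1 < p.2)%N}.
  by move=> p /B_Y; rewrite mem_Yseq.
have boundW : bound <= #|calW (calB A u)|%:Z.
  rewrite /bound /m (dim_calB hAl hAr hAalt hspan hbasis).
  exact: card_calW_ge (map_uniq (free_uniq freeB)) B_lt hnot.
split=> //; apply: le_trans boundW _; rewrite lez_nat.
exact: card_calW_le_dim_ImPsi hAl hAr hAalt hbasis.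
Qed.
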